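(* Let $\mathcal{P}$ be a polyomino, $\mathbb{K}$ a field, $S=\mathbb{K}[x_v\mid v\in V(\mathcal{P})]$, $I_{\mathcal{P}}$ the polyomino ideal and $\mathbb{K}[\mathcal{P}]=S/I_{\mathcal{P}}$. Suppose $\mathcal{W}:I_1,\dots,I_\ell$ is a zig-zag walk of $\mathcal{P}$ with corners $v_i,z_i,u_i,v_{i+1}$ of $I_i$ as in the definition of zig-zag walk. Then $x_{v_1},\dots,x_{v_\ell}$ and $$f_{\mathcal{W}}=\prod_{k=1}^{\ell}x_{z_k}-\prod_{j=1}^{\ell}x_{u_j}$$ are zerodivisors of $\mathbb{K}[\mathcal{P}]$, with $x_{v_i}f_{\mathcal{W}}\in I_{\mathcal{P}}$ for $i=1,\dots,\ell$.
   Context: For $a\in\mathbb{N}^2$ the cell $[a,a+(1,1)]$ has vertices $a,a+(1,0),a+(0,1),a+(1,1)$ and four edges. A polyomino $\mathcal{P}$ is a finite nonempty set of cells such that any two cells are joined by a sequence of cells of $\mathcal{P}$, consecutive ones sharing an edge. $V(\mathcal{P})$ is the union of the vertex sets of its cells. For $a=(i,j)$, $b=(k,\ell)$ with $i<k$, $j<\ell$, the interval $[a,b]=\{(p,q): i\le p\le k,\ j\le q\le\ell\}$ has diagonal corners $a,b$ and anti-diagonal corners $(i,\ell),(k,j)$; it is an inner interval of $\mathcal{P}$ if all its cells belong to $\mathcal{P}$. $I_{\mathcal{P}}$ is generated by the binomials $x_ax_b-x_cx_d$ for inner intervals $[a,b]$ with anti-diagonal corners $c,d$. A horizontal (resp.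 vertical) edge interval of $\mathcal{P}$ is a set of lattice points $\{(t,j):i\le t\le k\}$ (resp. $\{(i,t): j\le t\le k\}$) such that each pair of consecutive points forms an edge of some cell of $\mathcal{P}$. A zig-zag walk of $\mathcal{P}$ is a sequence of distinct inner intervals $I_1,\dots,I_\ell$ of $\mathcal{P}$ such that, for each $i$, $v_i,z_i$ are the diagonal (resp. anti-diagonal) corners and $u_i,v_{i+1}$ the anti-diagonal (resp. diagonal) corners of $I_i$, and: (Z1) $I_1\cap I_\ell=\{v_1\}=\{v_{\ell+1}\}$ and $I_i\cap I_{i+1}=\{v_{i+1}\}$ for $i=1,\dots,\ell-1$; (Z2) $v_i$ and $v_{i+1}$ lie on a common (horizontal or vertical) edge interval of $\mathcal{P}$ for $i=1,\dots,\ell$; (Z3) for $i\ne j$ in $\{1,\dots,\ell\}$ there is no inner interval of $\mathcal{P}$ containing both $z_i$ and $z_j$. *)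

From HB Require Import structures.
From mathcomp Require Import all_boot all_algebra.
From mathcomp Require Import mpoly.
Set Implicit Arguments. Unset Strict Implicit. Unset Printing Implicit Defensive.
Import GRing.Theory.
Local Open Scope ring_scope.

(* Lattice points of N^2. A cell [a, a+(1,1)] is represented by its corner a. *)
Definition point := (nat * nat)%type.

Definition cell_vertices (a : point) : seq point :=
  [:: a; (a.1.+1, a.2); (a.1, a.2.+1); (a.1.+1, a.2.+1)].

Definition cell_edges (a : point) : seq (point * point) :=
  [:: (a, (a.1.+1, a.2)); (a, (a.1, a.2.+1));
      ((a.1.+1, a.2), (a.1.+1, a.2.+1)); ((a.1, a.2.+1), (a.1.+1, a.2.+1))].

Definition adjacent_cells (a b : point) : bool :=
  ((a.1 == b.1) && ((a.2.+1 == b.2) || (b.2.+1 == a.2))) ||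
  ((a.2 == b.2) && ((a.1.+1 == b.1) || (b.1.+1 == a.1))).

Definition is_polyomino (P : seq point) : Prop :=
  P != [::] /\
  forall a b, a \in P -> b \in P ->
    exists p : seq point,
      [/\ all (fun c => c \in P) p, path adjacent_cells a p & last a p = b].

Definition VP (P : seq point) : seq point := undup (flatten (map cell_vertices P)).
Definition nV (P : seq point) : nat := size (VP P).

(* S = K[x_v | v in V(P)] is {mpoly K[nV P]}, x_v being the variable indexed by
   the position of v in VP P (x_v := 0 if v is not a vertex; never used so). *)
Definition xv (K : fieldType) (P : seq point) (v : point) : {mpoly K[nV P]} :=
  if (insub (index v (VP P)) : option 'I_(nV P)) is Some i then 'X_i else 0.

(* An interval [a,b] is given by the pair (a,b); it is valid when a < b
   componentwise. *)
Definition pinterval := (point * point)%type.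
Definition valid_interval (I : pinterval) : bool :=
  (I.1.1 < I.2.1)%N && (I.1.2 < I.2.2)%N.
Definition in_interval (I : pinterval) (p : point) : bool :=
  (I.1.1 <= p.1 <= I.2.1)%N && (I.1.2 <= p.2 <= I.2.2)%N.
Definition cell_of_interval (I : pinterval) (c : point) : bool :=
  (I.1.1 <= c.1 < I.2.1)%N && (I.1.2 <= c.2 < I.2.2)%N.
Definition inner_interval (P : seq point) (I : pinterval) : Prop :=
  valid_interval I /\ forall c, cell_of_interval I c -> c \in P.

Definition diag1 (I : pinterval) : point := I.1.
Definition diag2 (I : pinterval) : point := I.2.
Definition anti1 (I : pinterval) : point := (I.1.1, I.2.2).
Definition anti2 (I : pinterval) : point := (I.2.1, I.1.2).

Definition binom (K : fieldType) (P : seq point) (I : pinterval) : {mpoly K[nV P]} :=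
  xv K P (diag1 I) * xv K P (diag2 I) - xv K P (anti1 I) * xv K P (anti2 I).

Definition in_IP (K : fieldType) (P : seq point) (f : {mpoly K[nV P]}) : Prop :=
  exists s : seq ({mpoly K[nV P]} * pinterval),
    (forall q, q \in s -> inner_interval P q.2) /\
    f = \sum_(q <- s) q.1 * binom K P q.2.

Definition zerodivisor_KP (K : fieldType) (P : seq point) (g : {mpoly K[nV P]}) : Prop :=
  exists h : {mpoly K[nV P]}, ~ in_IP h /\ in_IP (g * h).

Definition edge_of_P (P : seq point) (p q : point) : Prop :=
  exists c, c \in P /\ (((p, q) \in cell_edges c) || ((q, p) \in cell_edges c)).

Definition horiz_edge_interval (P : seq point) (j i k : nat) : Prop :=
  (i <= k)%N /\ forall t, (i <= t < k)%N -> edge_of_P P (t, j) (t.+1, j).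
Definition vert_edge_interval (P : seq point) (i j k : nat) : Prop :=
  (j <= k)%N /\ forall t, (j <= t < k)%N -> edge_of_P P (i, t) (i, t.+1).

Definition on_common_edge_interval (P : seq point) (p q : point) : Prop :=
  (exists j i k, horiz_edge_interval P j i k /\
     p.2 = j /\ q.2 = j /\ (i <= p.1 <= k)%N /\ (i <= q.1 <= k)%N) \/
  (exists i j k, vert_edge_interval P i j k /\
     p.1 = i /\ q.1 = i /\ (j <= p.2 <= k)%N /\ (j <= q.2 <= k)%N).

Definition same_pair (p q r s : point) : Prop :=
  (p = r /\ q = s) \/ (p = s /\ q = r).

(* Zig-zag walk I_1..I_l, 0-indexed: I 0 .. I (l-1); corners v i, z i, u i,
   v (i+1) of I i, with v l = v 0. *)
Definition zigzag_walk (P : seq point) (l : nat) (I : nat -> pinterval)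
    (v z u : nat -> point) : Prop :=
  (0 < l)%N /\
    (forall i, (i < l)%N -> inner_interval P (I i)) /\
    (forall i j, (i < l)%N -> (j < l)%N -> i <> j -> I i <> I j) /\
    (forall i, (i < l)%N ->
       (same_pair (v i) (z i) (diag1 (I i)) (diag2 (I i)) /\
        same_pair (u i) (v i.+1) (anti1 (I i)) (anti2 (I i))) \/
       (same_pair (v i) (z i) (anti1 (I i)) (anti2 (I i)) /\
        same_pair (u i) (v i.+1) (diag1 (I i)) (diag2 (I i)))) /\
    (v l = v 0 /\
     (forall p, (in_interval (I 0) p && in_interval (I l.-1) p) <-> p = v 0) /\
     (forall i, (i < l.-1)%N ->
        forall p, (in_interval (I i) p && in_interval (I i.+1) p) <-> p = v i.+1)) /\
    (forall i, (i < l)%N -> on_common_edge_interval P (v i) (v i.+1)) /\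
    (forall i j, (i < l)%N -> (j < l)%N -> i <> j ->
       ~ exists J, inner_interval P J /\ in_interval J (z i) /\ in_interval J (z j)).

(* Each interval I_k of the walk yields the relation
   x_{v_k} x_{z_k} = x_{u_k} x_{v_{k+1}} modulo I_P (it is its inner 2-minor up
   to sign); multiplying these relations around the closed walk, starting from
   v_i, gives x_{v_i} f_W in I_P.
   Non-membership in I_P is certified by evaluation: if no inner interval
   contains two distinct points of a set T, then every inner 2-minor, hence all
   of I_P, vanishes at the 0/1 indicator point of T. For T = {v_1} this shows
   x_{v_1} is not in I_P. By (Z3) the set T = {z_1, ..., z_l} qualifies and does
   not contain u_1, so f_W evaluates to 1 - 0 and is not in I_P either. *)

From mathcomp Require Import all_boot all_algebra.
From mathcomp Require Import mpoly.
From mathcomp Require Import zify ring.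
Import GRing.Theory.
Set Implicit Arguments.
Unset Strict Implicit.
Unset Printing Implicit Defensive.
Local Open Scope ring_scope.

Definition diagonal (J : pinterval) : seq point := [:: diag1 J; diag2 J].
Definition antidiagonal (J : pinterval) : seq point := [:: anti1 J; anti2 J].
Definition corner (J : pinterval) (w : point) : bool :=
  (w \in diagonal J) || (w \in antidiagonal J).

Lemma same_pair_mem (a b p q : point) :
  same_pair a b p q -> (a \in [:: p; q]) && (b \in [:: p; q]).
Proof. by case=> [[-> ->]|[-> ->]]; rewrite !inE !eqxx ?orbT. Qed.

Lemma corner_in_interval J w : valid_interval J -> corner J w -> in_interval J w.
Proof.
case: J => [[a1 a2] [b1 b2]] /andP [/= h1 h2].
by rewrite /corner !inE -!orbA => /or4P [] /eqP -> /=; rewrite /in_interval /=; lia.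
Qed.

Lemma diag1_neq_diag2 J : valid_interval J -> diag1 J != diag2 J.
Proof. by case: J => [[a1 a2] [b1 b2]] /andP [/= h1 _]; rewrite /= xpair_eqE /=; lia. Qed.

Lemma anti1_neq_anti2 J : valid_interval J -> anti1 J != anti2 J.
Proof. by case: J => [[a1 a2] [b1 b2]] /andP [/= h1 _]; rewrite /= xpair_eqE /=; lia. Qed.

Lemma diagonal_antidiagonal_neq J p q :
  valid_interval J -> p \in diagonal J -> q \in antidiagonal J -> p != q.
Proof.
case: J => [[a1 a2] [b1 b2]] /andP [/= h1 h2].
by rewrite !inE => /orP [] /eqP -> /orP [] /eqP ->; rewrite xpair_eqE /=; lia.
Qed.

Lemma mem_cell_vertices c w :
  (c.1 <= w.1 <= c.1.+1)%N -> (c.2 <= w.2 <= c.2.+1)%N -> w \in cell_vertices c.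
Proof. by case: c w => [c1 c2] [w1 w2] /= h1 h2; rewrite !inE !xpair_eqE /=; lia. Qed.

Section PolyominoIdeal.
Variables (K : fieldType) (P : seq point).
Local Notation x := (xv K P).
Local Notation IP := (@in_IP K P).

Lemma corner_mem_VP J w : inner_interval P J -> corner J w -> w \in VP P.
Proof.
move=> [validJ cellP] /(corner_in_interval validJ).
case: J validJ cellP => [[a1 a2] [b1 b2]] /andP [/= h1 h2] cellP /andP [/= hw1 hw2].
pose c := (minn w.1 b1.-1, minn w.2 b2.-1).
rewrite mem_undup; apply/flatten_mapP; exists c.
  by apply: cellP; rewrite /cell_of_interval /=; lia.
by apply: mem_cell_vertices => /=; lia.
Qed.

Lemma in_IP0 : IP 0.
Proof. by exists [::]; rewrite big_nil. Qed.

Lemma in_IPD f g : IP f -> IP g -> IP (f + g).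
Proof.
move=> [s [sP ->]] [t [tP ->]]; exists (s ++ t); rewrite big_cat; split=> // q.
by rewrite mem_cat => /orP [/sP|/tP].
Qed.

Lemma in_IPMl c f : IP f -> IP (c * f).
Proof.
move=> [s [sP ->]]; exists [seq (c * q.1, q.2) | q <- s]; split.
  by move=> _ /mapP [q /sP qP ->].
by rewrite big_map mulr_sumr; apply: eq_bigr => q _; rewrite mulrA.
Qed.

Lemma in_IPN f : IP f -> IP (- f).
Proof. by move=> /(in_IPMl (-1)); rewrite mulN1r. Qed.

Lemma in_IP_binom J : inner_interval P J -> IP (binom K P J).
Proof.
by move=> JP; exists [:: (1, J)]; rewrite big_seq1 mul1r; split=> // q; rewrite inE => /eqP ->.
Qed.

Lemma in_IP_opposite_corners J a b c d :
  inner_interval P J ->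
  (same_pair a b (diag1 J) (diag2 J) /\ same_pair c d (anti1 J) (anti2 J)) \/
  (same_pair a b (anti1 J) (anti2 J) /\ same_pair c d (diag1 J) (diag2 J)) ->
  IP (x a * x b - x c * x d).
Proof.
move=> /in_IP_binom JP [] [[[-> ->]|[-> ->]] [[-> ->]|[-> ->]]];
  [| | | | rewrite -opprB; apply: in_IPN ..]; move: JP; rewrite /binom;
  congr IP; ring.
Qed.

Lemma in_IP_telescope (a b c : nat -> {mpoly K[nV P]}) j m :
  (forall k, (j <= k < m)%N -> IP (a k * b k - c k * a k.+1)) -> (j <= m)%N ->
  IP (a j * \prod_(j <= k < m) b k - a m * \prod_(j <= k < m) c k).
Proof.
elim: m => [|m IHm] step; rewrite leq_eqVlt => /orP [/eqP <-|//jm].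
- by rewrite !big_geq // subrr; exact: in_IP0.
- by rewrite !big_geq // subrr; exact: in_IP0.
have IH : IP (a j * \prod_(j <= k < m) b k - a m * \prod_(j <= k < m) c k).
  by apply: IHm jm => k /andP [jk km]; apply: step; rewrite jk leqW.
rewrite !big_nat_recr //=.
set Z := \prod_(j <= k < m) b k; set C := \prod_(j <= k < m) c k.
have -> : a j * (Z * b m) - a m.+1 * (C * c m) =
          b m * (a j * Z - a m * C) + C * (a m * b m - c m * a m.+1) by ring.
by apply: in_IPD; apply: in_IPMl => //; apply: step; rewrite leqnn andbT.
Qed.

Definition point_indicator (T : pred point) (i : 'I_(nV P)) : K :=
  (T (nth (0, 0)%N (VP P) i))%:R.

Lemma meval_xv_indicator T w :
  (x w).@[point_indicator T] = ((w \in VP P) && T w)%:R.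
Proof.
rewrite /xv; case: insubP => [i|]; rewrite index_mem; last first.
  by move=> /negbTE ->; rewrite meval0.
by move=> wP iE; rewrite mevalXU /point_indicator iE nth_index // wP.
Qed.

Definition scattered (T : pred point) : Prop :=
  forall J a b, inner_interval P J -> in_interval J a -> in_interval J b ->
    T a -> T b -> a = b.

Lemma meval_in_IP T f : scattered T -> IP f -> f.@[point_indicator T] = 0.
Proof.
move=> scT [s [sP ->]]; rewrite raddf_sum big1_seq // => [[g J]] /sP /= JP.
have validJ := JP.1.
have no_pair p q : p != q -> corner J p -> corner J q ->
    (((p \in VP P) && T p) * ((q \in VP P) && T q) = 0)%N.
  move=> pq cp cq; case: (T p) / idP => Tp; case: (T q) / idP => Tq;
    rewrite ?andbF ?muln0 ?mul0n //.
  by case/eqP: pq; apply: (scT J) => //; apply: corner_in_interval.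
rewrite mevalM /binom mevalB !mevalM !meval_xv_indicator -!natrM.
rewrite !no_pair ?subrr ?mulr0 ?diag1_neq_diag2 ?anti1_neq_anti2 //.
all: by rewrite /corner !inE eqxx ?orbT.
Qed.

Lemma xv_notin_IP w : w \in VP P -> ~ IP (x w).
Proof.
move=> wP xP; have scw : scattered (pred1 w) by move=> J a b _ _ _ /eqP -> /eqP ->.
by have /eqP := meval_in_IP scw xP; rewrite meval_xv_indicator wP /= eqxx oner_eq0.
Qed.
End PolyominoIdeal.

Section ZigzagWalk.
Variables (K : fieldType) (P : seq point) (l : nat) (I : nat -> pinterval).
Variables (v z u : nat -> point).
Hypothesis walk : zigzag_walk P l I v z u.
Local Notation x := (xv K P).
Local Notation fW := (\prod_(k < l) x (z k) - \prod_(k < l) x (u k)).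

Lemma zigzag_inner k : (k < l)%N -> inner_interval P (I k).
Proof. by case: walk => _ [innerI _]; apply: innerI. Qed.

Lemma zigzag_opposite_corners k : (k < l)%N ->
  (same_pair (v k) (z k) (diag1 (I k)) (diag2 (I k)) /\
   same_pair (u k) (v k.+1) (anti1 (I k)) (anti2 (I k))) \/
  (same_pair (v k) (z k) (anti1 (I k)) (anti2 (I k)) /\
   same_pair (u k) (v k.+1) (diag1 (I k)) (diag2 (I k))).
Proof. by case: walk => _ [_ [_ [cornersI _]]]; apply: cornersI. Qed.

Lemma zigzag_corners k : (k < l)%N ->
  [/\ corner (I k) (v k), corner (I k) (z k), corner (I k) (u k) & u k != z k].
Proof.
move=> kl; have validI := (zigzag_inner kl).1.
have [[vz uv]|[vz uv]] := zigzag_opposite_corners kl;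
  move: (same_pair_mem vz) (same_pair_mem uv) => /andP [vI zI] /andP [uI _];
  rewrite /corner vI zI uI ?orbT; split => //.
- by rewrite eq_sym (diagonal_antidiagonal_neq validI).
- by rewrite (diagonal_antidiagonal_neq validI).
Qed.

Lemma zigzag_step k : (k < l)%N -> in_IP (x (v k) * x (z k) - x (u k) * x (v k.+1)).
Proof.
by move=> kl; apply: in_IP_opposite_corners (zigzag_inner kl) (zigzag_opposite_corners kl).
Qed.

Lemma zigzag_closed : v l = v 0%N.
Proof. by case: walk => _ [_ [_ [_ [[]]]]]. Qed.

Lemma xv_mul_zigzag_in_IP i : (i < l)%N -> in_IP (x (v i) * fW).
Proof.
move=> il.
have telescope j m : (j <= m <= l)%N -> in_IP
    (x (v j) * \prod_(j <= k < m) x (z k) - x (v m) * \prod_(j <= k < m) x (u k)).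
  move=> /andP [jm ml].
  apply: (in_IP_telescope (a := x \o v) (b := x \o z) (c := x \o u)) => // k /andP [_ km].
  exact/zigzag_step/(leq_trans km).
have head := telescope 0%N i; have tail := telescope i l.
rewrite /= (ltnW il) leqnn zigzag_closed in head tail.
rewrite -(big_mkord xpredT (fun k => x (z k))) -(big_mkord xpredT (fun k => x (u k))).
rewrite !(big_cat_nat (leq0n i) (ltnW il)) /=.
set Z1 := \prod_(0 <= k < i) _ in head *; set Z2 := \prod_(i <= k < l) _ in tail *.
set U1 := \prod_(0 <= k < i) _ in head *; set U2 := \prod_(i <= k < l) _ in tail *.
have -> : x (v i) * (Z1 * Z2 - U1 * U2) =
          Z1 * (x (v i) * Z2 - x (v 0%N) * U2) + U2 * (x (v 0%N) * Z1 - x (v i) * U1).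
  by ring.
by apply: in_IPD; apply: in_IPMl; [apply: tail | apply: head].
Qed.

Lemma zigzag_z_scattered : scattered P [pred w in map z (iota 0 l)].
Proof.
case: walk => _ [_ [_ [_ [_ [_ Z3]]]]] J a b JP aJ bJ.
rewrite !inE => /mapP [i + aE] /mapP [j + bE]; rewrite !mem_iota /= => il jl.
rewrite aE bE in aJ bJ *; have [-> //|ij] := eqVneq i j.
by case: (Z3 i j il jl (elimN eqP ij)); exists J.
Qed.

Lemma zigzag_poly_notin_IP : ~ in_IP fW.
Proof.
have l0 : (0 < l)%N by case: walk.
have [_ z0I u0I uz0] := zigzag_corners l0.
have validI0 := (zigzag_inner l0).1.
have zs k : (k < l)%N -> z k \in map z (iota 0 l) by move=> kl; rewrite map_f // mem_iota.
have u0zs : u 0%N \notin map z (iota 0 l).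
  apply: contra uz0 => u0zs; apply/eqP/(zigzag_z_scattered (zigzag_inner l0)) => //.
  - exact: corner_in_interval validI0 u0I.
  - exact: corner_in_interval validI0 z0I.
  - exact: zs.
move=> /(meval_in_IP zigzag_z_scattered) /eqP; apply/negP.
rewrite mevalB !rmorph_prod /= big1 => [|k _]; last first.
  have [_ zkI _ _] := zigzag_corners (ltn_ord k).
  by rewrite meval_xv_indicator (corner_mem_VP (zigzag_inner (ltn_ord k)) zkI) inE zs.
rewrite (bigD1 (Ordinal l0)) //= meval_xv_indicator inE (negbTE u0zs).
by rewrite andbF mul0r subr0 oner_eq0.
Qed.
End ZigzagWalk.

Theorem proposition3p5 (K : fieldType) (P : seq point) (l : nat)
    (I : nat -> pinterval) (v z u : nat -> point) :
  is_polyomino P ->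
  zigzag_walk P l I v z u ->
  let fW := \prod_(k < l) xv K P (z k) - \prod_(j < l) xv K P (u j) in
  zerodivisor_KP fW /\
  (forall i, (i < l)%N ->
     zerodivisor_KP (xv K P (v i)) /\ in_IP (xv K P (v i) * fW)).
Proof.
move=> _ walk fW.
have xv_mul_in_IP i (il : (i < l)%N) : in_IP (xv K P (v i) * fW) :=
  xv_mul_zigzag_in_IP K walk il.
have fW_notin_IP : ~ in_IP fW := zigzag_poly_notin_IP walk.
have l0 : (0 < l)%N by case: walk.
have [v0I _ _ _] := zigzag_corners walk l0.
split=> [|i il]; last by split; [exists fW | ]; auto.
exists (xv K P (v 0%N)); rewrite mulrC; split; last exact: xv_mul_in_IP.
exact/xv_notin_IP/(corner_mem_VP (zigzag_inner walk l0) v0I).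
Qed.
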